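(* Let $R\subset S$ be an FCP ring extension and let $\mathcal E$ be the set of essential elements of $[R,S]$. Then $\mathcal S[R,S]=\bigcap_{E\in\mathcal E}E$, and $\mathcal S[R,S]$ is the least element of $\mathcal E$.
   Context: All rings are commutative with identity. $[R,S]$ is the lattice of $R$-subalgebras of $S$ (meet = intersection, join = product). FCP: every chain in $[R,S]$ is finite. $T\subset U$ minimal means $[T,U]=\{T,U\}$; an atom of $[R,S]$ is $T$ with $R\subset T$ minimal; the socle $\mathcal S[R,S]$ is the product of all atoms of $[R,S]$. An element $T\in[R,S]$ is essential if $T\neq R$ and $U\cap T\neq R$ for every $U\in[R,S]$ with $U\neq R$. *)

(* Subsets of S are Prop-valued predicates S -> Prop;
   equality of subalgebras is extensional equality of predicates. *)
From Stdlib Require List.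
From mathcomp Require Import all_boot all_algebra.
Set Implicit Arguments. Unset Strict Implicit. Unset Printing Implicit Defensive.
Import GRing.Theory.
Local Open Scope ring_scope.

Section RingExt.
Variable S : comPzRingType.

Definition subsetS (A B : S -> Prop) : Prop := forall x, A x -> B x.
Definition seteqS (A B : S -> Prop) : Prop := subsetS A B /\ subsetS B A.
Definition setTS : S -> Prop := fun _ => True.
Definition setIS (A B : S -> Prop) : S -> Prop := fun x => A x /\ B x.

Definition is_subring (A : S -> Prop) : Prop :=
  [/\ A 1, (forall x y, A x -> A y -> A (x - y))
         & (forall x y, A x -> A y -> A (x * y))].

Definition in_interval (R T : S -> Prop) : Prop := is_subring T /\ subsetS R T.

Definition minimal_in (R T U : S -> Prop) : Prop :=
  [/\ in_interval R T, in_interval R U, subsetS T U, ~ seteqS T U &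
      forall V, in_interval R V -> subsetS T V -> subsetS V U ->
        seteqS V T \/ seteqS V U].

Definition atom (R T : S -> Prop) : Prop := minimal_in R R T.

(* socle: product (= lattice join, i.e. R-subalgebra generated) of all atoms
   of [R,S]; the empty product is R. *)
Definition socle (R : S -> Prop) : S -> Prop :=
  fun x => forall U, in_interval R U -> (forall T, atom R T -> subsetS T U) -> U x.

Definition essential (R T : S -> Prop) : Prop :=
  [/\ in_interval R T, ~ seteqS T R &
      forall U, in_interval R U -> ~ seteqS U R -> ~ seteqS (setIS U T) R].

Definition chain_in (R : S -> Prop) (C : (S -> Prop) -> Prop) : Prop :=
  (forall T, C T -> in_interval R T) /\
  (forall T U, C T -> C U -> subsetS T U \/ subsetS U T).

Definition FCP (R : S -> Prop) : Prop :=
  forall C, chain_in R C ->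
    exists s : seq (S -> Prop), forall T, C T -> exists2 T', List.In T' s & seteqS T T'.

End RingExt.

From Pilot Require Import Defs.
From mathcomp Require Import all_boot all_algebra.
From mathcomp Require Import zify.
From Stdlib Require Import Classical IndefiniteDescription.
Local Open Scope ring_scope.
Set Implicit Arguments. Unset Strict Implicit.

(* Every atom A of [R,S] lies in every essential E: A ∩ E lies between R and
   the atom A and is not R, so it is A.  Hence the socle, the least element of
   [R,S] above all atoms, lies in every essential element.  Conversely, FCP
   forbids infinite strictly descending chains, so every U ≠ R in [R,S]
   contains an atom; that atom lies in U ∩ socle, so U ∩ socle ≠ R and the
   socle is itself essential (taking U = S shows socle ≠ R). *)

Section SocleEssential.
Variable S : comPzRingType.
Implicit Types (R A B C E U V W : S -> Prop).

Lemma seteqS_sym A B : seteqS A B -> seteqS B A.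
Proof. by case. Qed.

Lemma seteqS_trans A B C : seteqS A B -> seteqS B C -> seteqS A C.
Proof. by move=> [h1 h2] [h3 h4]; split=> x hx; auto. Qed.

Lemma finite_cover_collision (s : seq (S -> Prop)) (V : nat -> S -> Prop) :
  (forall i, exists2 T, List.In T s & seteqS (V i) T) ->
  exists i j, (i < j)%N /\ seteqS (V i) (V j).
Proof.
elim: s V => [|a s IHs] V cover; first by case: (cover 0%N).
have [[i Via]|noa] := classic (exists i, seteqS (V i) a); last first.
  apply: IHs => j; case: (cover j) => T [<-|Ts] VjT; last by exists T.
  by case: noa; exists j.
pose W j := V (i + 1 + j)%N.
have [[j Wja]|noa] := classic (exists j, seteqS (W j) a).
  exists i, (i + 1 + j)%N; split; first lia.
  exact: seteqS_trans Via (seteqS_sym Wja).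
have [|j [k [jk Wjk]]] := IHs W.
  move=> j; case: (cover (i + 1 + j)%N) => T [<-|Ts] WjT; last by exists T.
  by case: noa; exists j.
by exists (i + 1 + j)%N, (i + 1 + k)%N; split; first lia.
Qed.

Lemma FCP_descending_stationary R (V : nat -> S -> Prop) : FCP R ->
  (forall n, in_interval R (V n)) -> (forall n, subsetS (V n.+1) (V n)) ->
  exists n, subsetS (V n) (V n.+1).
Proof.
move=> fcp VR Vdec; apply: NNPP => strict.
have Vmono m n : (m <= n)%N -> subsetS (V n) (V m).
  move=> /subnKC <-; elim: (n - m)%N => [|k IHk] x; first by rewrite addn0.
  by rewrite addnS => /Vdec /IHk.
have chainV : chain_in R (fun T => exists n, T = V n).
  split=> [T [n ->] //|T T' [m ->] [n ->]].
  by case: (leqP m n) => mn; [right | left]; apply: Vmono => //; apply: ltnW.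
have [s cover] := fcp _ chainV.
have [i [j [ij [Vij _]]]] :=
  finite_cover_collision (fun i => cover _ (ex_intro _ i erefl)).
by apply: strict; exists i => x /Vij /(Vmono _ _ ij).
Qed.

Lemma FCP_minimal_element R (P : (S -> Prop) -> Prop) V0 : FCP R ->
  (forall V, P V -> in_interval R V) -> P V0 ->
  exists2 W, P W & forall V, P V -> subsetS V W -> subsetS W V.
Proof.
move=> fcp PR PV0; apply: NNPP => nomin.
have below W : exists V, P W -> [/\ P V, subsetS V W & ~ subsetS W V].
  have [PW|nPW] := classic (P W); last by exists W => /nPW.
  suff [V [PV VW WV]] : exists V, [/\ P V, subsetS V W & ~ subsetS W V].
    by exists V.
  apply: NNPP => noV; apply: nomin; exists W => // V PV VW.
  by apply: NNPP => WV; apply: noV; exists V.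
pose f W := proj1_sig (constructive_indefinite_description _ (below W)).
have fP W : P W -> [/\ P (f W), subsetS (f W) W & ~ subsetS W (f W)].
  exact: proj2_sig (constructive_indefinite_description _ (below W)).
pose Vs n := iter n f V0.
have PVs n : P (Vs n) by elim: n => [|n IHn] //=; case: (fP _ IHn).
have [|n] := @FCP_descending_stationary R Vs fcp (fun n => PR _ (PVs n)).
  by move=> n; case: (fP _ (PVs n)).
by case: (fP _ (PVs n)).
Qed.

Lemma setIS_in_interval R U V :
  in_interval R U -> in_interval R V -> in_interval R (Defs.setIS U V).
Proof.
move=> [[U1 UB UM] RU] [[V1 VB VM] RV]; split; last by move=> x Rx; split; auto.
by split=> [|x y [? ?] [? ?]|x y [? ?] [? ?]]; split; auto.
Qed.

Lemma atom_not_sub_base R A : atom R A -> ~ subsetS A R.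
Proof. by case=> _ _ RA neqRA _ AR; apply: neqRA. Qed.

Lemma atom_sub_essential R A E : atom R A -> essential R E -> subsetS A E.
Proof.
move=> [_ AR RA neqRA minA] [ER _ essE].
have nRA : ~ seteqS A R by move/seteqS_sym.
have RAE : subsetS R (Defs.setIS A E).
  by move=> x Rx; split; [apply: RA | case: ER => _; apply].
have [[AER _]|[_ AAE]] :=
  minA _ (setIS_in_interval AR ER) RAE (fun x => @proj1 _ _).
- by case: (essE A AR nRA); split.
- by move=> x /AAE[].
Qed.

Lemma FCP_exists_atom R U : is_subring R -> FCP R ->
  in_interval R U -> ~ seteqS U R -> exists2 A, atom R A & subsetS A U.
Proof.
move=> subR fcp UR nUR.
pose P V := [/\ in_interval R V, ~ seteqS V R & subsetS V U].
have PR V : P V -> in_interval R V by case.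
have PU : P U by split.
have [A [AR nAR AU] minA] := FCP_minimal_element fcp PR PU.
exists A => //; split=> //; first by split.
- by case: AR.
- by move/seteqS_sym.
move=> V VR RV VA; have [VeqR|nVR] := classic (seteqS V R); first by left.
right; split=> //; apply: minA => //; split=> // x /VA; exact: AU.
Qed.

Lemma socle_in_interval R : in_interval R (socle R).
Proof.
split; last by move=> x Rx U [_ RU] _; exact: RU.
split=> [U [[]] //|x y sx sy U UR atU|x y sx sy U UR atU];
  case: (UR) => -[_ UB UM] _.
- by apply: UB; [apply: sx | apply: sy].
- by apply: UM; [apply: sx | apply: sy].
Qed.

Lemma atom_sub_socle R A : atom R A -> subsetS A (socle R).
Proof. by move=> atA x Ax U _ atU; apply: atU atA _ Ax. Qed.

Lemma socle_sub_essential R E : essential R E -> subsetS (socle R) E.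
Proof.
move=> essE x sx; apply: sx; first by case: essE.
by move=> A atA; exact: atom_sub_essential atA essE.
Qed.

Lemma socle_essential R : is_subring R -> ~ seteqS R (@setTS S) -> FCP R ->
  essential R (socle R).
Proof.
move=> subR nRS fcp; split; first exact: socle_in_interval.
  have TR : in_interval R (@setTS S) by do 2 split.
  have nTR : ~ seteqS (@setTS S) R by move/seteqS_sym.
  have [A atA _] := FCP_exists_atom subR fcp TR nTR.
  move=> [sR _]; apply: (atom_not_sub_base atA).
  by move=> x /(atom_sub_socle atA) /sR.
move=> U UR nUR [IR _].
have [A atA AU] := FCP_exists_atom subR fcp UR nUR.
apply: (atom_not_sub_base atA) => x Ax; apply: IR.
by split; [exact: AU | exact: atom_sub_socle atA _ Ax].
Qed.

End SocleEssential.

Theorem proposition8p111 (S : comPzRingType) (R : S -> Prop) :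
  is_subring R -> ~ seteqS R (@setTS S) -> FCP R ->
  (forall x, socle R x <-> (forall E, essential R E -> E x)) /\
  (essential R (socle R) /\ forall E, essential R E -> subsetS (socle R) E).
Proof.
move=> subR nRS fcp.
have socE := socle_essential subR nRS fcp.
split; last by split=> // E; apply: socle_sub_essential.
move=> x; split=> [sx E essE | allE]; last exact: allE.
exact: socle_sub_essential essE _ sx.
Qed.
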